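(* Let $(\mathcal H,\mathfrak A_0)$ be a Hilbert quasi *-algebra and $\xi\in\mathcal H$. Then: (i) ${\sf R}(\xi^* )=\{\eta\in D((L_\xi\restriction_{\mathfrak A_0^2})^* ):\ \eta y\in D(L_\xi^* )\ \text{for all } y\in\mathfrak A_0\}$; (ii) if $(\mathcal H,\mathfrak A_0)$ has a unit, then ${\sf R}(\xi^* )=D(L_\xi^* )$; (iii) if $(\mathcal H,\mathfrak A_0)$ has a unit and ${\sf R}(\xi^* )=\mathcal H$, then $\overline{L}_\xi$ and $\overline{L}_{\xi^*}$ are bounded operators.
   Context: A Hilbert algebra is a *-algebra $\mathfrak A_0$ with an inner product $\langle\cdot,\cdot\rangle$ such that (i) for each $x$, $y\mapsto xy$ is continuous for the inner product norm; (ii) $\langle xy,z\rangle=\langle y,x^*z\rangle$ for all $x,y,z$; (iii) $\langle x,y\rangle=\langle y^*,x^*\rangle$ for all $x,y$; (iv) the linear span of $\{xy:x,y\in\mathfrak A_0\}$ is dense in $\mathfrak A_0$. Let $\mathcal H$ be the Hilbert space completion of $\mathfrak A_0$; the involution extends isometrically to $\mathcal H$, and the products $\xi x$, $x\xi$ for $\xi\in\mathcal H$, $x\in\mathfrak A_0$ are defined by continuity. It is assumed that (A): if $\xi\in\mathcal H$ and $\xi x=0$ for all $x\in\mathfrak A_0$ then $\xi=0$. With these operations $(\mathcal H,\mathfrak A_0)$ is a Banach quasi *-algebra, called a Hilbert quasi *-algebra. A unit is $e\in\mathfrak A_0$ with $\xi e=e\xi=\xi$ for all $\xi\in\mathcal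 H$. For $\xi\in\mathcal H$, $L_\xi$ is the operator in $\mathcal H$ with domain $\mathfrak A_0$ given by $L_\xi x=\xi x$; $\overline{L}_\xi$ is its closure. $\mathfrak A_0^2$ denotes the linear span of $\{xy:x,y\in\mathfrak A_0\}$. Weak multiplication: for $\xi,\eta\in\mathcal H$, $\xi$ is a left multiplier of $\eta$ (and $\eta$ a right multiplier of $\xi$) if there is $\zeta\in\mathcal H$ with $\langle\eta x,\xi^*y\rangle=\langle\zeta x,y\rangle$ for all $x,y\in\mathfrak A_0$; then $\xi\square\eta:=\zeta$. ${\sf R}(\xi)$ denotes the set of right multipliers of $\xi$, i.e. of those $\eta$ for which $\xi\square\eta$ is defined. *)

From Stdlib Require Import Reals.
Open Scope R_scope.

Record Cplx : Type := mkC { re : R; im : R }.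
Definition C0 : Cplx := mkC 0 0.
Definition C1 : Cplx := mkC 1 0.
Definition Cadd (a b : Cplx) : Cplx := mkC (re a + re b) (im a + im b).
Definition Cmul (a b : Cplx) : Cplx :=
  mkC (re a * re b - im a * im b) (re a * im b + im a * re b).
Definition Cconj (a : Cplx) : Cplx := mkC (re a) (- im a).

(** [carrier] is the Hilbert space H (complex, inner product linear in the
  first argument, complete).  [inA0] is the dense subspace A0, which is a
  Hilbert algebra for the restricted operations.  [mulr xi x] is the product
  xi x (xi in H, x in A0) and [mull x xi] is x xi; both are the continuous
  extensions of the product of A0 (they are only meaningful when the A0
  argument is in A0).  [star] is the isometric extension of the involution. *)
Record HQA : Type := {
  carrier :> Type;
  add : carrier -> carrier -> carrier;
  zero : carrier;
  opp : carrier -> carrier;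
  scal : Cplx -> carrier -> carrier;
  inner : carrier -> carrier -> Cplx;
  star : carrier -> carrier;
  mulr : carrier -> carrier -> carrier;
  mull : carrier -> carrier -> carrier;
  inA0 : carrier -> Prop;

  add_assoc : forall x y z, add x (add y z) = add (add x y) z;
  add_comm : forall x y, add x y = add y x;
  add_zero : forall x, add x zero = x;
  add_opp : forall x, add x (opp x) = zero;
  scal_assoc : forall a b x, scal a (scal b x) = scal (Cmul a b) x;
  scal_one : forall x, scal C1 x = x;
  scal_add_l : forall a x y, scal a (add x y) = add (scal a x) (scal a y);
  scal_add_r : forall a b x, scal (Cadd a b) x = add (scal a x) (scal b x);

  inner_add_l : forall x y z, inner (add x y) z = Cadd (inner x z) (inner y z);
  inner_scal_l : forall a x y, inner (scal a x) y = Cmul a (inner x y);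
  inner_conj : forall x y, inner y x = Cconj (inner x y);
  inner_pos : forall x, 0 <= re (inner x x);
  inner_def : forall x, inner x x = C0 -> x = zero;

  complete : forall u : nat -> carrier,
    (forall eps, 0 < eps -> exists N, forall m n, (N <= m)%nat -> (N <= n)%nat ->
        sqrt (re (inner (add (u m) (opp (u n))) (add (u m) (opp (u n))))) < eps) ->
    exists l, forall eps, 0 < eps -> exists N, forall n, (N <= n)%nat ->
        sqrt (re (inner (add (u n) (opp l)) (add (u n) (opp l)))) < eps;

  A0_zero : inA0 zero;
  A0_add : forall x y, inA0 x -> inA0 y -> inA0 (add x y);
  A0_scal : forall a x, inA0 x -> inA0 (scal a x);
  A0_dense : forall xi eps, 0 < eps -> exists x, inA0 x /\
      sqrt (re (inner (add xi (opp x)) (add xi (opp x)))) < eps;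

  A0_mul : forall x y, inA0 x -> inA0 y -> inA0 (mulr x y);
  mul_agree : forall x y, inA0 x -> inA0 y -> mulr x y = mull x y;
  mul_assoc : forall x y z, inA0 x -> inA0 y -> inA0 z ->
      mulr (mulr x y) z = mulr x (mulr y z);
  mulr_add_r : forall x y z, inA0 x -> inA0 y -> inA0 z ->
      mulr x (add y z) = add (mulr x y) (mulr x z);
  mulr_scal_r : forall a x y, inA0 x -> inA0 y ->
      mulr x (scal a y) = scal a (mulr x y);
  A0_star : forall x, inA0 x -> inA0 (star x);
  star_mul : forall x y, inA0 x -> inA0 y -> star (mulr x y) = mulr (star y) (star x);

  mulr_add_l : forall xi eta x, inA0 x -> mulr (add xi eta) x = add (mulr xi x) (mulr eta x);
  mulr_scal_l : forall a xi x, inA0 x -> mulr (scal a xi) x = scal a (mulr xi x);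
  mulr_bounded : forall x, inA0 x -> exists c, forall xi,
      sqrt (re (inner (mulr xi x) (mulr xi x))) <= c * sqrt (re (inner xi xi));
  mull_add_r : forall x xi eta, inA0 x -> mull x (add xi eta) = add (mull x xi) (mull x eta);
  mull_scal_r : forall a x xi, inA0 x -> mull x (scal a xi) = scal a (mull x xi);
  mull_bounded : forall x, inA0 x -> exists c, forall xi,
      sqrt (re (inner (mull x xi) (mull x xi))) <= c * sqrt (re (inner xi xi));

  star_star : forall xi, star (star xi) = xi;
  star_add : forall xi eta, star (add xi eta) = add (star xi) (star eta);
  star_scal : forall a xi, star (scal a xi) = scal (Cconj a) (star xi);
  star_isometric : forall xi, re (inner (star xi) (star xi)) = re (inner xi xi);

  HA_ii : forall x y z, inA0 x -> inA0 y -> inA0 z ->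
      inner (mulr x y) z = inner y (mulr (star x) z);
  HA_iii : forall x y, inA0 x -> inA0 y -> inner x y = inner (star y) (star x);

  (* Hilbert algebra axiom (iv): A0^2 dense in A0 *)
  HA_iv : forall x eps, inA0 x -> 0 < eps -> exists z,
      (exists l : list (carrier * carrier),
          (forall p, List.In p l -> inA0 (fst p) /\ inA0 (snd p)) /\
          z = List.fold_right (fun p acc => add (mulr (fst p) (snd p)) acc) zero l) /\
      sqrt (re (inner (add x (opp z)) (add x (opp z)))) < eps;

  condA : forall xi, (forall x, inA0 x -> mulr xi x = zero) -> xi = zero
}.

Arguments add {_}. Arguments zero {_}. Arguments opp {_}. Arguments scal {_}.
Arguments inner {_}. Arguments star {_}. Arguments mulr {_}. Arguments mull {_}.
Arguments inA0 {_}.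

Section Defs.
Variable A : HQA.

Definition hnorm (xi : A) : R := sqrt (re (inner xi xi)).

Definition converges (u : nat -> A) (l : A) : Prop :=
  forall eps, 0 < eps -> exists N, forall n, (N <= n)%nat -> hnorm (add (u n) (opp l)) < eps.

Inductive A0sq : A -> Prop :=
| A0sq_zero : A0sq zero
| A0sq_prod : forall x y, inA0 x -> inA0 y -> A0sq (mulr x y)
| A0sq_add : forall u v, A0sq u -> A0sq v -> A0sq (add u v)
| A0sq_scal : forall a u, A0sq u -> A0sq (scal a u).

(** eta in D(L_xi^* ), L_xi x = xi x with domain A0 *)
Definition in_dom_adj_L (xi eta : A) : Prop :=
  exists zeta : A, forall x, inA0 x -> inner (mulr xi x) eta = inner x zeta.

Definition in_dom_adj_L_sq (xi eta : A) : Prop :=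
  exists zeta : A, forall z, A0sq z -> inner (mulr xi z) eta = inner z zeta.

Definition weak_mul (xi eta zeta : A) : Prop :=
  forall x y, inA0 x -> inA0 y ->
    inner (mulr eta x) (mulr (star xi) y) = inner (mulr zeta x) y.

Definition right_multipliers (xi eta : A) : Prop := exists zeta, weak_mul xi eta zeta.

Definition has_unit : Prop :=
  exists e : A, inA0 e /\ forall xi : A, mulr xi e = xi /\ mull e xi = xi.

Definition closure_graph (xi u v : A) : Prop :=
  exists x : nat -> A, (forall n, inA0 (x n)) /\ converges x u /\
    converges (fun n => mulr xi (x n)) v.

Definition closure_bounded (xi : A) : Prop :=
  (forall u, exists v, closure_graph xi u v) /\
  exists c : R, forall u v, closure_graph xi u v -> hnorm v <= c * hnorm u.

End Defs.

(* (i) and (ii) only use the Hilbert-algebra identities, extended by continuity from A0 to H: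
   tested on z = x y* with x, y in A0, the weak product ξ* □ η = ζ reads ⟨ξ z, η⟩ = ⟨z, ζ⟩, the
   adjoint identity for L_ξ on A0²; a unit e turns A0² into A0 and η e into η.
   For (iii), if the adjoint L_ξ^* is everywhere defined then the vectors ξ x / ‖x‖ are weakly
   bounded, hence bounded by the uniform boundedness principle (proved by a sliding hump).  So
   L_ξ is bounded on A0, so is L_{ξ*} by the duality ⟨ξ y, x⟩ = ⟨y, ξ* x⟩, and by completeness a
   bounded densely defined operator has an everywhere defined bounded closure. *)

From Pilot Require Import Defs.
From Stdlib Require Import Reals Lra Lia Psatz Classical ClassicalEpsilon.
Open Scope R_scope.

Arguments add_assoc {_}. Arguments add_comm {_}. Arguments add_zero {_}.
Arguments add_opp {_}. Arguments scal_assoc {_}. Arguments scal_one {_}.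
Arguments scal_add_l {_}. Arguments scal_add_r {_}. Arguments inner_add_l {_}.
Arguments inner_scal_l {_}. Arguments inner_conj {_}. Arguments inner_pos {_}.
Arguments inner_def {_}. Arguments complete {_}. Arguments A0_zero {_}.
Arguments A0_add {_}. Arguments A0_scal {_}. Arguments A0_dense {_}.
Arguments A0_mul {_}. Arguments mul_assoc {_}. Arguments mulr_add_r {_}.
Arguments mulr_scal_r {_}. Arguments A0_star {_}. Arguments star_mul {_}.
Arguments mulr_add_l {_}. Arguments mulr_scal_l {_}. Arguments mulr_bounded {_}.
Arguments star_star {_}. Arguments star_add {_}. Arguments star_scal {_}.
Arguments star_isometric {_}. Arguments HA_ii {_}. Arguments HA_iii {_}.

Lemma Ceq (a b : Cplx) : re a = re b -> im a = im b -> a = b.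
Proof. destruct a, b; simpl; intros; subst; reflexivity. Qed.

Lemma Cconj_inj (a b : Cplx) : Cconj a = Cconj b -> a = b.
Proof. destruct a, b; unfold Cconj; simpl; intro E; injection E; intros; f_equal; lra. Qed.

Lemma Rabs_le_eps_eq (a b : R) : (forall eps, 0 < eps -> Rabs (a - b) <= eps) -> a = b.
Proof.
  intro H. apply Rminus_diag_uniq. destruct (Req_dec (a - b) 0) as [| Hne]; [assumption |].
  pose proof (Rabs_pos_lt _ Hne). specialize (H (Rabs (a - b) / 2)). lra.
Qed.

Section Hilbert.
Variable A : HQA.
Local Notation sub x y := (add x (opp y)).
Local Notation nrm x := (hnorm A x).
Local Notation n2 x := (re (inner x x)).

Definition rscal (t : R) (x : A) : A := scal (mkC t 0) x.

Lemma add0l (x : A) : add zero x = x.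
Proof. rewrite add_comm; apply add_zero. Qed.

Lemma addNl (x : A) : add (opp x) x = zero.
Proof. rewrite add_comm; apply add_opp. Qed.

Lemma addI (a b c : A) : add a b = add a c -> b = c.
Proof.
  intro E. rewrite <- (add0l b), <- (add0l c), <- (addNl a), <- !add_assoc, E.
  reflexivity.
Qed.

Lemma opp_unique (x y : A) : add x y = zero -> y = opp x.
Proof. intro E. apply (addI x). rewrite E, add_opp. reflexivity. Qed.

Lemma opp_add (x y : A) : opp (add x y) = add (opp x) (opp y).
Proof.
  symmetry; apply opp_unique.
  rewrite (add_comm (opp x)), add_assoc, <- (add_assoc x y), add_opp, add_zero, add_opp.
  reflexivity.
Qed.

Lemma oppK (x : A) : opp (opp x) = x.
Proof. symmetry; apply opp_unique, addNl. Qed.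

Lemma subKr (p q r : A) : sub p q = add (sub p r) (sub r q).
Proof. rewrite <- add_assoc, (add_assoc (opp r)), addNl, add0l. reflexivity. Qed.

Lemma subK (a b : A) : a = add b (sub a b).
Proof. rewrite add_assoc, (add_comm b a), <- add_assoc, add_opp, add_zero. reflexivity. Qed.

Lemma opp_sub (a b : A) : opp (sub a b) = sub b a.
Proof. rewrite opp_add, oppK, add_comm. reflexivity. Qed.

Lemma sub_add_add (p q r s : A) : add (sub p q) (sub r s) = sub (add p r) (add q s).
Proof.
  rewrite opp_add, <- !add_assoc. f_equal.
  rewrite !add_assoc. f_equal. apply add_comm.
Qed.

Lemma sub_eq0 (a b : A) : sub a b = zero -> a = b.
Proof. intro E. rewrite (subK a b), E, add_zero. reflexivity. Qed.

Lemma scal0 (x : A) : scal Defs.C0 x = zero.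
Proof.
  apply (addI (scal Defs.C0 x)). rewrite add_zero, <- scal_add_r.
  f_equal. unfold Cadd, Defs.C0; simpl; f_equal; ring.
Qed.

Lemma opp_scal (x : A) : opp x = scal (mkC (-1) 0) x.
Proof.
  symmetry; apply opp_unique.
  rewrite <- (scal_one x) at 1. rewrite <- scal_add_r, <- (scal0 x).
  f_equal. unfold Cadd, Defs.C1, Defs.C0; simpl; f_equal; ring.
Qed.

Lemma scal_sub (a : Cplx) (x y : A) : scal a (sub x y) = sub (scal a x) (scal a y).
Proof.
  rewrite scal_add_l, !opp_scal, !scal_assoc. do 2 f_equal.
  destruct a; unfold Cmul; simpl; f_equal; ring.
Qed.

Lemma star_sub (a b : A) : star (sub a b) = sub (star a) (star b).
Proof.
  rewrite star_add, !opp_scal, star_scal. do 2 f_equal.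
  unfold Cconj; simpl; f_equal; ring.
Qed.

Lemma re_sym (x y : A) : re (inner y x) = re (inner x y).
Proof. rewrite inner_conj. reflexivity. Qed.

Lemma im_sym (x y : A) : im (inner y x) = - im (inner x y).
Proof. rewrite inner_conj. reflexivity. Qed.

Lemma im_inner_self (x : A) : im (inner x x) = 0.
Proof. pose proof (im_sym x x). lra. Qed.

Lemma re_addl (x y z : A) : re (inner (add x y) z) = re (inner x z) + re (inner y z).
Proof. rewrite inner_add_l. reflexivity. Qed.

Lemma im_addl (x y z : A) : im (inner (add x y) z) = im (inner x z) + im (inner y z).
Proof. rewrite inner_add_l. reflexivity. Qed.

Lemma re_addr (x y z : A) : re (inner z (add x y)) = re (inner z x) + re (inner z y).
Proof. rewrite re_sym, re_addl, (re_sym z x), (re_sym z y). reflexivity. Qed.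

Lemma re_scall (a : Cplx) (x y : A) :
  re (inner (scal a x) y) = re a * re (inner x y) - im a * im (inner x y).
Proof. rewrite inner_scal_l. reflexivity. Qed.

Lemma im_scall (a : Cplx) (x y : A) :
  im (inner (scal a x) y) = re a * im (inner x y) + im a * re (inner x y).
Proof. rewrite inner_scal_l. reflexivity. Qed.

Lemma re_scalr (a : Cplx) (x y : A) :
  re (inner y (scal a x)) = re a * re (inner y x) + im a * im (inner y x).
Proof. rewrite re_sym, re_scall, (re_sym y x), (im_sym y x). ring. Qed.

Lemma im_scalr (a : Cplx) (x y : A) :
  im (inner y (scal a x)) = re a * im (inner y x) - im a * re (inner y x).
Proof. rewrite im_sym, im_scall, (re_sym y x), (im_sym y x). ring. Qed.

Lemma re_subl (x y z : A) : re (inner (sub x y) z) = re (inner x z) - re (inner y z).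
Proof. rewrite re_addl, opp_scal, re_scall; simpl; ring. Qed.

Lemma im_subl (x y z : A) : im (inner (sub x y) z) = im (inner x z) - im (inner y z).
Proof. rewrite im_addl, opp_scal, im_scall; simpl; ring. Qed.

Lemma re_subr (x y z : A) : re (inner z (sub x y)) = re (inner z x) - re (inner z y).
Proof. rewrite re_sym, re_subl, (re_sym z x), (re_sym z y). reflexivity. Qed.

Lemma im_subr (x y z : A) : im (inner z (sub x y)) = im (inner z x) - im (inner z y).
Proof. rewrite im_sym, im_subl, (im_sym z x), (im_sym z y). ring. Qed.

Lemma re_rscall (t : R) (x y : A) : re (inner (rscal t x) y) = t * re (inner x y).
Proof. unfold rscal. rewrite re_scall; simpl. ring. Qed.

Lemma re_rscalr (t : R) (x y : A) : re (inner y (rscal t x)) = t * re (inner y x).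
Proof. unfold rscal. rewrite re_scalr; simpl. ring. Qed.

Lemma inner0l (y : A) : inner zero y = Defs.C0.
Proof. rewrite <- (scal0 zero), inner_scal_l. unfold Cmul, Defs.C0; simpl; f_equal; ring. Qed.

Lemma inner_eq0 (x : A) : re (inner x x) = 0 -> x = zero.
Proof. intro H. apply inner_def, Ceq; [exact H | apply im_inner_self]. Qed.

Lemma hnorm_ge0 (x : A) : 0 <= nrm x.
Proof. apply sqrt_pos. Qed.

Lemma hnorm_sqr (x : A) : nrm x * nrm x = n2 x.
Proof. apply sqrt_sqrt, inner_pos. Qed.

Lemma hnorm_eq0 (x : A) : nrm x = 0 -> x = zero.
Proof. intro H. apply inner_eq0, sqrt_eq_0; [apply inner_pos | exact H]. Qed.

Lemma hnorm0 : nrm (@zero A) = 0.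
Proof. unfold hnorm. rewrite inner0l. apply sqrt_0. Qed.

Lemma hnorm_scal (a : Cplx) (x : A) :
  nrm (scal a x) = sqrt (re a * re a + im a * im a) * nrm x.
Proof.
  unfold hnorm. rewrite <- sqrt_mult by (nra || apply inner_pos).
  rewrite re_scall, re_scalr, im_scalr, im_inner_self. f_equal. ring.
Qed.

Lemma hnorm_rscal (t : R) (x : A) : nrm (rscal t x) = Rabs t * nrm x.
Proof.
  unfold rscal. rewrite hnorm_scal; simpl.
  rewrite Rmult_0_l, Rplus_0_r. fold (Rsqr t). rewrite sqrt_Rsqr_abs. reflexivity.
Qed.

Lemma hnorm_opp (x : A) : nrm (opp x) = nrm x.
Proof.
  rewrite opp_scal, hnorm_scal; simpl.
  replace (-1 * -1 + 0 * 0) with 1 by ring. rewrite sqrt_1. ring.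
Qed.

Lemma hnorm_sub_sym (a b : A) : nrm (sub a b) = nrm (sub b a).
Proof. rewrite <- opp_sub, hnorm_opp. reflexivity. Qed.

Lemma hnorm_star (a : A) : nrm (star a) = nrm a.
Proof. unfold hnorm. rewrite star_isometric. reflexivity. Qed.

Lemma discriminant_le (a b c : R) : 0 <= a -> 0 <= c ->
  (forall t, 0 <= a + 2 * t * b + t * t * c) -> b * b <= a * c.
Proof.
  intros Ha Hc H. destruct (Rle_lt_or_eq_dec 0 c Hc) as [Hc' | <-].
  - specialize (H (- b / c)).
    replace (a + 2 * (- b / c) * b + - b / c * (- b / c) * c) with ((a * c - b * b) / c)
      in H by (field; lra).
    apply Rmult_le_reg_r with (/ c); [apply Rinv_0_lt_compat; lra | unfold Rdiv in H; nra].
  - destruct (Req_dec b 0) as [-> | Hb]; [lra |].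
    specialize (H (- (a + 1) / (2 * b))).
    replace (a + 2 * (- (a + 1) / (2 * b)) * b + - (a + 1) / (2 * b) * (- (a + 1) / (2 * b)) * 0)
      with (-1) in H by (field; lra). lra.
Qed.

Lemma cauchy_schwarz_re (x y : A) : Rabs (re (inner x y)) <= nrm x * nrm y.
Proof.
  assert (H : re (inner x y) * re (inner x y) <= n2 x * n2 y).
  { apply discriminant_le; try apply inner_pos. intro t.
    replace (n2 x + 2 * t * re (inner x y) + t * t * n2 y) with (n2 (add x (rscal t y))).
    - apply inner_pos.
    - rewrite re_addl, !re_addr, !re_rscall, !re_rscalr, (re_sym x y). ring. }
  unfold hnorm. rewrite <- sqrt_mult, <- sqrt_Rsqr_abs by apply inner_pos.
  apply sqrt_le_1_alt. exact H.
Qed.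

Lemma cauchy_schwarz_im (x y : A) : Rabs (im (inner x y)) <= nrm x * nrm y.
Proof.
  pose proof (cauchy_schwarz_re x (scal (mkC 0 1) y)) as H.
  rewrite re_scalr, hnorm_scal in H; simpl in H.
  replace (0 * 0 + 1 * 1) with 1 in H by ring. rewrite sqrt_1 in H.
  replace (0 * re (inner x y) + 1 * im (inner x y)) with (im (inner x y)) in H by ring. lra.
Qed.

Lemma hnorm_triangle (x y : A) : nrm (add x y) <= nrm x + nrm y.
Proof.
  pose proof (hnorm_ge0 x); pose proof (hnorm_ge0 y).
  unfold hnorm at 1. rewrite <- (sqrt_square (nrm x + nrm y)) by lra.
  apply sqrt_le_1_alt.
  rewrite re_addl, !re_addr, (re_sym x y), <- (hnorm_sqr x), <- (hnorm_sqr y).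
  pose proof (cauchy_schwarz_re x y). pose proof (Rle_abs (re (inner x y))). nra.
Qed.

Lemma hnorm_sub_triangle (p q r : A) : nrm (sub p q) <= nrm (sub p r) + nrm (sub r q).
Proof. rewrite (subKr p q r). apply hnorm_triangle. Qed.

Lemma hnorm_le_sub (a b : A) : nrm a <= nrm b + nrm (sub a b).
Proof. rewrite (subK a b) at 1. apply hnorm_triangle. Qed.


(** * Extension by continuity from A0 to H *)

Definition bounded_additive (F : A -> A) : Prop :=
  (forall a b, F (sub a b) = sub (F a) (F b)) /\
  exists K, 0 <= K /\ forall a, nrm (F a) <= K * nrm a.

Definition lipschitz_form (f : A -> Cplx) : Prop :=
  exists K, 0 <= K /\ forall a b,
    Rabs (re (f a) - re (f b)) <= K * nrm (sub a b) /\
    Rabs (im (f a) - im (f b)) <= K * nrm (sub a b).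

Lemma lipschitz_dense_ext (f g : A -> R) (K : R) : 0 <= K ->
  (forall a b, Rabs (f a - f b) <= K * nrm (sub a b)) ->
  (forall a b, Rabs (g a - g b) <= K * nrm (sub a b)) ->
  (forall x, inA0 x -> f x = g x) -> forall xi, f xi = g xi.
Proof.
  intros HK Hf Hg Hfg xi. apply Rabs_le_eps_eq. intros eps Heps.
  set (d := eps / (2 * K + 1)).
  destruct (A0_dense xi d) as [x [Hx Hd]]; [unfold d; apply Rdiv_lt_0_compat; lra |].
  change (nrm (sub xi x) < d) in Hd.
  pose proof (Hf xi x) as Bf. pose proof (Hg x xi) as Bg.
  rewrite hnorm_sub_sym in Bg. rewrite (Hfg x Hx) in Bf.
  replace (f xi - g xi) with ((f xi - g x) + (g x - g xi)) by ring.
  eapply Rle_trans; [apply Rabs_triang |].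
  assert (eps = (2 * K + 1) * d) by (unfold d; field; lra).
  pose proof (hnorm_ge0 (sub xi x)). nra.
Qed.

Lemma lipschitz_form_dense_ext (f g : A -> Cplx) : lipschitz_form f -> lipschitz_form g ->
  (forall x, inA0 x -> f x = g x) -> forall xi, f xi = g xi.
Proof.
  intros [Kf [Kf0 Hf]] [Kg [Kg0 Hg]] Hfg xi.
  assert (Hle : forall a b r, r <= Kf * nrm (sub a b) \/ r <= Kg * nrm (sub a b) ->
    r <= (Kf + Kg) * nrm (sub a b)) by (intros a b r; pose proof (hnorm_ge0 (sub a b)); nra).
  apply Ceq; [apply (lipschitz_dense_ext (fun a => re (f a)) (fun a => re (g a)) (Kf + Kg))
             | apply (lipschitz_dense_ext (fun a => im (f a)) (fun a => im (g a)) (Kf + Kg))];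
    solve [ lra | intros a b; apply Hle; (left + right); first [apply Hf | apply Hg]
          | intros x Hx; rewrite Hfg; auto ].
Qed.

Lemma lipschitz_inner_l (F : A -> A) (w : A) :
  bounded_additive F -> lipschitz_form (fun a => inner (F a) w).
Proof.
  intros [HF [K [K0 BF]]]. exists (K * nrm w). pose proof (hnorm_ge0 w). split; [nra |].
  intros a b. rewrite <- re_subl, <- im_subl, <- HF. pose proof (BF (sub a b)).
  split; [eapply Rle_trans; [apply cauchy_schwarz_re |] | eapply Rle_trans; [apply cauchy_schwarz_im |]];
    nra.
Qed.

Lemma lipschitz_inner_r (F : A -> A) (w : A) :
  bounded_additive F -> lipschitz_form (fun a => inner w (F a)).
Proof.
  intros [HF [K [K0 BF]]]. exists (K * nrm w). pose proof (hnorm_ge0 w). split; [nra |].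
  intros a b. rewrite <- re_subr, <- im_subr, <- HF. pose proof (BF (sub a b)).
  split; [eapply Rle_trans; [apply cauchy_schwarz_re |] | eapply Rle_trans; [apply cauchy_schwarz_im |]];
    nra.
Qed.

Lemma bounded_additive_dense_ext (F G : A -> A) : bounded_additive F -> bounded_additive G ->
  (forall x, inA0 x -> F x = G x) -> forall xi, F xi = G xi.
Proof.
  intros HF HG Hfg xi.
  assert (Hw : forall w, inner (F xi) w = inner (G xi) w).
  { intro w. revert xi. apply lipschitz_form_dense_ext; try apply lipschitz_inner_l; auto.
    intros x Hx. rewrite Hfg; auto. }
  apply sub_eq0, inner_eq0. rewrite re_subl, Hw. ring.
Qed.

Lemma bounded_additive_id : bounded_additive (fun a => a).
Proof. split; [reflexivity |]. exists 1. split; [lra | intro; lra]. Qed.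

Lemma bounded_additive_comp (F G : A -> A) :
  bounded_additive F -> bounded_additive G -> bounded_additive (fun a => G (F a)).
Proof.
  intros [HF [KF [KF0 BF]]] [HG [KG [KG0 BG]]]. split.
  - intros a b. rewrite HF, HG. reflexivity.
  - exists (KG * KF). split; [nra |]. intro a.
    eapply Rle_trans; [apply BG |]. pose proof (BF a). nra.
Qed.

Lemma bounded_additive_add (F G : A -> A) :
  bounded_additive F -> bounded_additive G -> bounded_additive (fun a => add (F a) (G a)).
Proof.
  intros [HF [KF [KF0 BF]]] [HG [KG [KG0 BG]]]. split.
  - intros a b. rewrite HF, HG. apply sub_add_add.
  - exists (KF + KG). split; [lra |]. intro a.
    eapply Rle_trans; [apply hnorm_triangle |]. pose proof (BF a); pose proof (BG a). lra.
Qed.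

Lemma bounded_additive_scal (s : Cplx) : bounded_additive (scal s).
Proof.
  split; [apply scal_sub |]. exists (sqrt (re s * re s + im s * im s)).
  split; [apply sqrt_pos | intro a; rewrite hnorm_scal; lra].
Qed.

Lemma bounded_additive_star : bounded_additive (@star A).
Proof.
  split; [apply star_sub |]. exists 1. split; [lra | intro; rewrite hnorm_star; lra].
Qed.

Lemma mulr_sub_l (x a b : A) : inA0 x -> mulr (sub a b) x = sub (mulr a x) (mulr b x).
Proof. intro Hx. rewrite mulr_add_l, !opp_scal, mulr_scal_l; auto. Qed.

Lemma bounded_additive_mulr (x : A) : inA0 x -> bounded_additive (fun a => mulr a x).
Proof.
  intro Hx. split; [intros; apply mulr_sub_l, Hx |].
  destruct (mulr_bounded x Hx) as [c Hc]. exists (Rabs c). split; [apply Rabs_pos |].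
  intro a. specialize (Hc a). change (nrm (mulr a x) <= c * nrm a) in Hc.
  pose proof (Rle_abs c). pose proof (hnorm_ge0 a). nra.
Qed.


Lemma mulr_add_r_ext (xi a b : A) : inA0 a -> inA0 b ->
  mulr xi (add a b) = add (mulr xi a) (mulr xi b).
Proof.
  intros Ha Hb. revert xi.
  apply (bounded_additive_dense_ext (fun xi => mulr xi (add a b))
           (fun xi => add (mulr xi a) (mulr xi b))).
  - apply bounded_additive_mulr, A0_add; auto.
  - apply bounded_additive_add; apply bounded_additive_mulr; auto.
  - intros x Hx. apply mulr_add_r; auto.
Qed.

Lemma mulr_scal_r_ext (s : Cplx) (xi a : A) : inA0 a -> mulr xi (scal s a) = scal s (mulr xi a).
Proof.
  intro Ha. revert xi.
  apply (bounded_additive_dense_ext (fun xi => mulr xi (scal s a)) (fun xi => scal s (mulr xi a))).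
  - apply bounded_additive_mulr, A0_scal, Ha.
  - apply (bounded_additive_comp (fun xi => mulr xi a) (scal s));
      [apply bounded_additive_mulr, Ha | apply bounded_additive_scal].
  - intros x Hx. apply mulr_scal_r; auto.
Qed.

Lemma mulr_assoc_ext (xi x y : A) : inA0 x -> inA0 y -> mulr xi (mulr x y) = mulr (mulr xi x) y.
Proof.
  intros Hx Hy. revert xi.
  apply (bounded_additive_dense_ext (fun xi => mulr xi (mulr x y)) (fun xi => mulr (mulr xi x) y)).
  - apply bounded_additive_mulr, A0_mul; auto.
  - apply (bounded_additive_comp (fun xi => mulr xi x) (fun z => mulr z y));
      apply bounded_additive_mulr; auto.
  - intros z Hz. symmetry; apply mul_assoc; auto.
Qed.

Lemma mulr0r (xi : A) : mulr xi zero = zero.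
Proof. rewrite <- (scal0 zero) at 1. rewrite mulr_scal_r_ext by apply A0_zero. apply scal0. Qed.

Lemma mulr_sub_r_ext (xi a b : A) : inA0 a -> inA0 b ->
  mulr xi (sub a b) = sub (mulr xi a) (mulr xi b).
Proof.
  intros Ha Hb. rewrite !opp_scal, mulr_add_r_ext, mulr_scal_r_ext; auto using A0_scal.
Qed.

Lemma inner_mulr_A0 (a b y : A) : inA0 a -> inA0 b -> inA0 y ->
  inner (mulr a y) b = inner a (mulr b (star y)).
Proof.
  intros Ha Hb Hy.
  rewrite HA_iii, star_mul, <- (star_star y) at 1 by auto using A0_mul.
  rewrite <- HA_ii, (HA_iii a), star_mul, star_star by auto using A0_mul, A0_star.
  reflexivity.
Qed.

Lemma inner_mulr_ext (a b y : A) : inA0 y -> inner (mulr a y) b = inner a (mulr b (star y)).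
Proof.
  intro Hy.
  assert (HA0 : forall a, inA0 a -> forall b, inner (mulr a y) b = inner a (mulr b (star y))).
  { intros a0 Ha0.
    apply (lipschitz_form_dense_ext (fun b => inner (mulr a0 y) b)
             (fun b => inner a0 (mulr b (star y)))).
    - apply (lipschitz_inner_r (fun b => b)), bounded_additive_id.
    - apply (lipschitz_inner_r (fun b => mulr b (star y))), bounded_additive_mulr, A0_star, Hy.
    - intros; apply inner_mulr_A0; auto. }
  revert a.
  apply (lipschitz_form_dense_ext (fun a => inner (mulr a y) b) (fun a => inner a (mulr b (star y)))).
  - apply (lipschitz_inner_l (fun a => mulr a y)), bounded_additive_mulr, Hy.
  - apply (lipschitz_inner_l (fun a => a)), bounded_additive_id.
  - intros; apply HA0; auto.
Qed.

Lemma inner_mulr_star_ext (xi x y : A) : inA0 x -> inA0 y ->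
  inner (mulr xi y) x = inner y (mulr (star xi) x).
Proof.
  intros Hx Hy. revert xi.
  apply (lipschitz_form_dense_ext (fun xi => inner (mulr xi y) x)
           (fun xi => inner y (mulr (star xi) x))).
  - apply (lipschitz_inner_l (fun a => mulr a y)), bounded_additive_mulr, Hy.
  - apply (lipschitz_inner_r (fun a => mulr (star a) x)),
      (bounded_additive_comp (@star A) (fun z => mulr z x));
      [apply bounded_additive_star | apply bounded_additive_mulr, Hx].
  - intros z Hz. apply HA_ii; auto.
Qed.

Lemma A0sq_A0 (z : A) : A0sq A z -> inA0 z.
Proof. induction 1; auto using A0_zero, A0_mul, A0_add, A0_scal. Qed.


(** * Right multipliers of ξ* and the adjoint of L_ξ *)

Lemma right_multipliers_star_dom_adj (xi eta : A) : right_multipliers A (star xi) eta ->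
  in_dom_adj_L_sq A xi eta /\ forall y, inA0 y -> in_dom_adj_L A xi (mulr eta y).
Proof.
  intros [zeta Hz]. unfold weak_mul in Hz. rewrite star_star in Hz.
  assert (Hadj : forall x y, inA0 x -> inA0 y ->
    inner (mulr xi x) (mulr eta y) = inner x (mulr zeta y)).
  { intros x y Hx Hy. apply Cconj_inj. rewrite <- !inner_conj. apply Hz; auto. }
  split.
  - exists zeta. induction 1 as [| x y Hx Hy | u v Hu IHu Hv IHv | s u Hu IHu].
    + rewrite mulr0r, !inner0l. reflexivity.
    + rewrite mulr_assoc_ext, inner_mulr_ext, Hadj, (inner_mulr_ext x zeta y);
        auto using A0_star.
    + rewrite mulr_add_r_ext, !inner_add_l, IHu, IHv by (apply A0sq_A0; auto). reflexivity.
    + rewrite mulr_scal_r_ext, !inner_scal_l, IHu by (apply A0sq_A0; auto). reflexivity.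
  - intros y Hy. exists (mulr zeta y). intros x Hx. apply Hadj; auto.
Qed.

Lemma dom_adj_sq_right_multipliers_star (xi eta : A) :
  in_dom_adj_L_sq A xi eta -> right_multipliers A (star xi) eta.
Proof.
  intros [zeta Hz]. exists zeta. intros x y Hx Hy. rewrite star_star.
  apply Cconj_inj. rewrite <- !inner_conj.
  pose proof (Hz (mulr y (star x)) (A0sq_prod A y (star x) Hy (A0_star x Hx))) as H.
  rewrite mulr_assoc_ext, inner_mulr_ext, star_star in H by auto using A0_star.
  rewrite H, inner_mulr_ext, star_star by auto using A0_star. reflexivity.
Qed.

Lemma right_multipliers_star_unit (xi : A) : has_unit A -> forall eta,
  right_multipliers A (star xi) eta <-> in_dom_adj_L A xi eta.
Proof.
  intros [e [He Hu]] eta. split.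
  - intro H. destruct (Hu eta) as [Hee _].
    rewrite <- Hee. apply (right_multipliers_star_dom_adj xi eta H), He.
  - intros [zeta Hz]. apply dom_adj_sq_right_multipliers_star.
    exists zeta. intros z Hzs. apply Hz, A0sq_A0, Hzs.
Qed.

(** * Uniform boundedness *)

Definition unit_vec (w : A) : A := rscal (/ nrm w) w.

Lemma hnorm_unit_vec (w : A) : 0 < nrm w -> nrm (unit_vec w) = 1.
Proof.
  intro H. unfold unit_vec. rewrite hnorm_rscal, Rabs_right; [field; lra |].
  left; apply Rinv_0_lt_compat, H.
Qed.

Lemma re_unit_vec (w : A) : 0 < nrm w -> re (inner (unit_vec w) w) = nrm w.
Proof. intro H. unfold unit_vec. rewrite re_rscall, <- hnorm_sqr. field. lra. Qed.

Section SlidingHump.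
Variable w : nat -> A.
Hypothesis w_pos : forall n, 0 < nrm (w n).

(* Step n has length 3^-n and a sign making it reinforce the pairing with w n; the steps
   after n add up to at most half of 3^-n, so they cannot undo that. *)
Fixpoint hump (n : nat) : A :=
  match n with
  | O => zero
  | S k => add (hump k)
      (rscal ((if Rle_dec 0 (re (inner (hump k) (w (S k)))) then 1 else -1) * (/ 3) ^ S k)
         (unit_vec (w (S k))))
  end.

Lemma hump_step (k : nat) : nrm (sub (hump (S k)) (hump k)) = (/ 3) ^ S k.
Proof.
  assert (E : forall p q : A, sub (add p q) p = q).
  { intros p q. rewrite (add_comm p q), <- add_assoc, add_opp, add_zero. reflexivity. }
  simpl hump at 1. rewrite E, hnorm_rscal, hnorm_unit_vec by apply w_pos.
  pose proof (pow_lt (/ 3) (S k) ltac:(lra)). simpl pow in *. destruct (Rle_dec _ _).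
  - rewrite Rabs_right; lra.
  - rewrite Rabs_left; lra.
Qed.

Lemma hump_cauchy (n m : nat) : (n <= m)%nat -> nrm (sub (hump m) (hump n)) <= / 2 * (/ 3) ^ n.
Proof.
  intro Hnm. replace m with (n + (m - n))%nat by lia.
  enough (forall k, nrm (sub (hump (n + k)) (hump n)) <= / 2 * ((/ 3) ^ n - (/ 3) ^ (n + k))).
  { pose proof (pow_lt (/ 3) (n + (m - n)) ltac:(lra)). specialize (H (m - n)%nat). lra. }
  induction k as [| k IH].
  - rewrite Nat.add_0_r, add_opp, hnorm0. lra.
  - rewrite Nat.add_succ_r.
    eapply Rle_trans; [apply (hnorm_sub_triangle _ _ (hump (n + k))) |].
    rewrite hump_step. simpl pow. pose proof (pow_lt (/ 3) (n + k) ltac:(lra)). lra.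
Qed.

Lemma hump_limit : exists l, forall n, nrm (sub l (hump n)) <= / 2 * (/ 3) ^ n.
Proof.
  destruct (complete hump) as [l Hl].
  - intros eps Heps.
    destruct (pow_lt_1_zero (/ 3) ltac:(rewrite Rabs_right; lra) (2 * eps)) as [N HN]; [lra |].
    exists N. intros m n Hm Hn. change (nrm (sub (hump m) (hump n)) < eps).
    assert (Hsmall : forall k, (N <= k)%nat -> / 2 * (/ 3) ^ k < eps).
    { intros k Hk. specialize (HN k Hk). rewrite Rabs_right in HN; [lra |].
      left; apply pow_lt; lra. }
    destruct (Nat.le_ge_cases n m).
    + eapply Rle_lt_trans; [apply hump_cauchy | apply Hsmall]; auto.
    + rewrite hnorm_sub_sym. eapply Rle_lt_trans; [apply hump_cauchy | apply Hsmall]; auto.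
  - exists l. intro n. apply Rle_plus_epsilon. intros eps Heps.
    destruct (Hl eps Heps) as [N HN]. specialize (HN (Nat.max N n) (Nat.le_max_l _ _)).
    change (nrm (sub (hump (Nat.max N n)) l) < eps) in HN. rewrite hnorm_sub_sym in HN.
    pose proof (hump_cauchy n (Nat.max N n) (Nat.le_max_r _ _)).
    pose proof (hnorm_sub_triangle l (hump n) (hump (Nat.max N n))). lra.
Qed.

Lemma hump_aligned (k : nat) :
  (/ 3) ^ S k * nrm (w (S k)) <= Rabs (re (inner (hump (S k)) (w (S k)))).
Proof.
  simpl hump. rewrite re_addl, re_rscall, re_unit_vec by apply w_pos.
  pose proof (pow_lt (/ 3) (S k) ltac:(lra)). pose proof (w_pos (S k)). simpl pow in *.
  destruct (Rle_dec _ _).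
  - rewrite Rabs_right; nra.
  - rewrite Rabs_left; nra.
Qed.

Lemma hump_limit_large : exists l, forall k,
  / 2 * (/ 3) ^ S k * nrm (w (S k)) <= Rabs (re (inner l (w (S k)))).
Proof.
  destruct hump_limit as [l Hl]. exists l. intro k.
  pose proof (hump_aligned k) as Hal.
  pose proof (cauchy_schwarz_re (sub l (hump (S k))) (w (S k))) as Hcs.
  rewrite re_subl in Hcs.
  pose proof (Rabs_triang_inv (re (inner (hump (S k)) (w (S k)))) (re (inner l (w (S k))))).
  rewrite Rabs_minus_sym in H.
  assert (nrm (sub l (hump (S k))) * nrm (w (S k)) <= / 2 * (/ 3) ^ S k * nrm (w (S k)))
    by (apply Rmult_le_compat_r; [left; apply w_pos | apply Hl]).
  lra.
Qed.

End SlidingHump.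

Lemma weakly_bounded_bounded (I : Type) (v : I -> A) :
  (forall h, exists M, forall i, Rabs (re (inner h (v i))) <= M) ->
  exists c, forall i, nrm (v i) <= c.
Proof.
  intro Hweak. apply NNPP. intro Hunb.
  assert (Hbig : forall n : nat, exists i, 2 * 3 ^ n * (INR n + 1) < nrm (v i)).
  { intro n. apply not_all_not_ex. intro Hn. apply Hunb.
    exists (2 * 3 ^ n * (INR n + 1)). intro i. apply Rnot_lt_le, Hn. }
  set (g := fun n => proj1_sig (constructive_indefinite_description _ (Hbig n))).
  assert (Hg : forall n, 2 * 3 ^ n * (INR n + 1) < nrm (v (g n)))
    by (intro n; exact (proj2_sig (constructive_indefinite_description _ (Hbig n)))).
  assert (Hpos : forall n, 0 < nrm (v (g n))).
  { intro n. eapply Rle_lt_trans; [| apply Hg].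
    pose proof (pos_INR n). pose proof (pow_lt 3 n ltac:(lra)). nra. }
  destruct (hump_limit_large (fun n => v (g n)) Hpos) as [l Hl].
  destruct (Hweak l) as [M HM]. destruct (INR_unbounded M) as [k Hk].
  specialize (Hl k). specialize (HM (g (S k))). specialize (Hg (S k)).
  rewrite pow_inv in Hl. set (p := 3 ^ S k) in *.
  assert (Hp : 0 < p) by (apply pow_lt; lra).
  assert (INR (S k) + 1 < / 2 * / p * nrm (v (g (S k)))).
  { replace (INR (S k) + 1) with (/ 2 * / p * (2 * p * (INR (S k) + 1))) by (field; lra).
    apply Rmult_lt_compat_l; [| exact Hg]. apply Rmult_lt_0_compat; [lra | apply Rinv_0_lt_compat, Hp]. }
  rewrite S_INR in H. pose proof (pos_INR k). lra.
Qed.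


Lemma mulr_bound_of_dom_adj_total (xi : A) : (forall eta, in_dom_adj_L A xi eta) ->
  exists c, 0 <= c /\ forall x, inA0 x -> nrm (mulr xi x) <= c * nrm x.
Proof.
  intro Hadj.
  destruct (weakly_bounded_bounded {y : A | inA0 y /\ 0 < nrm y}
              (fun y => rscal (/ nrm (proj1_sig y)) (mulr xi (proj1_sig y)))) as [c Hc].
  { intro h. destruct (Hadj h) as [zeta Hz]. exists (nrm zeta). intros [y [Hy Hp]]; simpl.
    rewrite re_rscalr, re_sym, Hz, Rabs_mult, Rabs_right by (auto; left; apply Rinv_0_lt_compat, Hp).
    apply (Rmult_le_reg_l (nrm y) _ _ Hp).
    rewrite <- Rmult_assoc, Rinv_r by lra.
    pose proof (cauchy_schwarz_re y zeta). pose proof (hnorm_ge0 zeta). nra. }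
  exists (Rmax c 0). split; [apply Rmax_r |]. intros x Hx.
  destruct (Rle_lt_or_eq_dec _ _ (hnorm_ge0 x)) as [Hp | Hz].
  - specialize (Hc (exist _ x (conj Hx Hp))). simpl in Hc.
    rewrite hnorm_rscal, Rabs_right in Hc by (left; apply Rinv_0_lt_compat, Hp).
    apply (Rmult_le_reg_l (/ nrm x)); [apply Rinv_0_lt_compat, Hp |].
    replace (/ nrm x * (Rmax c 0 * nrm x)) with (Rmax c 0) by (field; lra).
    pose proof (Rmax_l c 0). lra.
  - rewrite (hnorm_eq0 x (eq_sym Hz)), mulr0r, hnorm0. lra.
Qed.

Lemma hnorm_le_of_dual_A0 (w : A) (K : R) : 0 <= K ->
  (forall y, inA0 y -> Rabs (re (inner y w)) <= K * nrm y) -> nrm w <= K.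
Proof.
  intros HK Hdual.
  assert (Hsq : nrm w * nrm w <= K * nrm w).
  { rewrite hnorm_sqr. apply Rle_plus_epsilon. intros eps Heps.
    pose proof (hnorm_ge0 w).
    set (d := eps / (K + nrm w + 1)).
    destruct (A0_dense w d) as [y [Hy Hd]]; [unfold d; apply Rdiv_lt_0_compat; lra |].
    change (nrm (sub w y) < d) in Hd.
    rewrite (subK w y) at 1. rewrite re_addl.
    pose proof (Hdual y Hy). pose proof (Rle_abs (re (inner y w))).
    pose proof (cauchy_schwarz_re (sub w y) w). pose proof (Rle_abs (re (inner (sub w y) w))).
    pose proof (hnorm_le_sub y w) as Hyw. rewrite hnorm_sub_sym in Hyw.
    assert (eps = (K + nrm w + 1) * d) by (unfold d; field; lra).
    pose proof (hnorm_ge0 (sub w y)). nra. }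
  destruct (Rle_lt_or_eq_dec _ _ (hnorm_ge0 w)) as [Hp | <-]; [| exact HK].
  apply (Rmult_le_reg_l (nrm w)); nra.
Qed.

Lemma mulr_bound_star (xi : A) (c : R) : 0 <= c ->
  (forall x, inA0 x -> nrm (mulr xi x) <= c * nrm x) ->
  forall x, inA0 x -> nrm (mulr (star xi) x) <= c * nrm x.
Proof.
  intros Hc Hb x Hx. apply hnorm_le_of_dual_A0; [pose proof (hnorm_ge0 x); nra |].
  intros y Hy. rewrite <- inner_mulr_star_ext by auto.
  eapply Rle_trans; [apply cauchy_schwarz_re |].
  pose proof (Hb y Hy). pose proof (hnorm_ge0 x). nra.
Qed.

Lemma inv_INR_small (eps : R) : 0 < eps -> exists N, forall n, (N <= n)%nat -> / (INR n + 1) < eps.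
Proof.
  intro He. destruct (INR_unbounded (/ eps)) as [N HN]. exists N. intros n Hn.
  apply le_INR in Hn. pose proof (Rinv_0_lt_compat _ He).
  rewrite <- (Rinv_inv eps). apply Rinv_lt_contravar; [apply Rmult_lt_0_compat |]; lra.
Qed.

Lemma closure_graph_total (xi : A) (c : R) : 0 <= c ->
  (forall x, inA0 x -> nrm (mulr xi x) <= c * nrm x) -> forall u, exists v, closure_graph A xi u v.
Proof.
  intros Hc Hb u.
  assert (Hd : forall n : nat, exists x, inA0 x /\ nrm (sub u x) < / (INR n + 1)).
  { intro n. apply A0_dense, Rinv_0_lt_compat. pose proof (pos_INR n). lra. }
  set (xs := fun n => proj1_sig (constructive_indefinite_description _ (Hd n))).
  assert (Hxs : forall n, inA0 (xs n) /\ nrm (sub u (xs n)) < / (INR n + 1))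
    by (intro n; exact (proj2_sig (constructive_indefinite_description _ (Hd n)))).
  destruct (complete (fun n => mulr xi (xs n))) as [v Hv].
  - intros eps Heps.
    destruct (inv_INR_small (eps / (2 * (c + 1)))) as [N HN]; [apply Rdiv_lt_0_compat; lra |].
    exists N. intros m n Hm Hn.
    change (nrm (sub (mulr xi (xs m)) (mulr xi (xs n))) < eps).
    destruct (Hxs m) as [Am Bm], (Hxs n) as [An Bn].
    rewrite <- mulr_sub_r_ext by auto.
    eapply Rle_lt_trans; [apply Hb; apply A0_add; [| rewrite opp_scal; apply A0_scal]; auto |].
    pose proof (hnorm_sub_triangle (xs m) (xs n) u) as Htri.
    rewrite (hnorm_sub_sym (xs m) u) in Htri.
    pose proof (HN m Hm). pose proof (HN n Hn).
    assert (eps = 2 * (c + 1) * (eps / (2 * (c + 1)))) by (field; lra).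
    pose proof (hnorm_ge0 (sub (xs m) (xs n))). nra.
  - exists v, xs. split; [intro n; apply Hxs |]. split; [| exact Hv].
    intros eps Heps. destruct (inv_INR_small eps Heps) as [N HN]. exists N. intros n Hn.
    change (nrm (sub (xs n) u) < eps). rewrite hnorm_sub_sym.
    pose proof (HN n Hn). pose proof (proj2 (Hxs n)). lra.
Qed.

Lemma closure_graph_bound (xi : A) (c : R) : 0 <= c ->
  (forall x, inA0 x -> nrm (mulr xi x) <= c * nrm x) ->
  forall u v, closure_graph A xi u v -> nrm v <= c * nrm u.
Proof.
  intros Hc Hb u v [x [Hx [Hxu Hxv]]]. apply Rle_plus_epsilon. intros eps Heps.
  set (d := eps / (c + 1)).
  assert (Hd : 0 < d) by (unfold d; apply Rdiv_lt_0_compat; lra).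
  destruct (Hxu d Hd) as [N1 H1], (Hxv d Hd) as [N2 H2].
  set (n := Nat.max N1 N2).
  specialize (H1 n (Nat.le_max_l _ _)). specialize (H2 n (Nat.le_max_r _ _)).
  change (nrm (sub (x n) u) < d) in H1. change (nrm (sub (mulr xi (x n)) v) < d) in H2.
  pose proof (hnorm_le_sub v (mulr xi (x n))) as Hv. rewrite hnorm_sub_sym in Hv.
  pose proof (Hb (x n) (Hx n)). pose proof (hnorm_le_sub (x n) u).
  assert (eps = (c + 1) * d) by (unfold d; field; lra).
  pose proof (hnorm_ge0 (sub (x n) u)). nra.
Qed.

Lemma closure_bounded_of_bound (xi : A) (c : R) : 0 <= c ->
  (forall x, inA0 x -> nrm (mulr xi x) <= c * nrm x) -> closure_bounded A xi.
Proof.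
  intros Hc Hb. split; [exact (closure_graph_total xi c Hc Hb) |].
  exists c. exact (closure_graph_bound xi c Hc Hb).
Qed.

End Hilbert.

Theorem mainTheorem8 (A : HQA) (xi : A) :
  (forall eta : A,
      right_multipliers A (star xi) eta <->
      (in_dom_adj_L_sq A xi eta /\
       forall y : A, inA0 y -> in_dom_adj_L A xi (mulr eta y))) /\
  (has_unit A -> forall eta : A, right_multipliers A (star xi) eta <-> in_dom_adj_L A xi eta) /\
  (has_unit A -> (forall eta : A, right_multipliers A (star xi) eta) ->
      closure_bounded A xi /\ closure_bounded A (star xi)).
Proof.
  split; [| split].
  - intro eta. split; [apply right_multipliers_star_dom_adj |].
    intros [Hsq _]. apply dom_adj_sq_right_multipliers_star, Hsq.
  - apply right_multipliers_star_unit.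
  - intros Hunit Hall.
    assert (Hadj : forall eta, in_dom_adj_L A xi eta)
      by (intro eta; apply (right_multipliers_star_unit A xi Hunit), Hall).
    destruct (mulr_bound_of_dom_adj_total A xi Hadj) as [c [Hc Hb]].
    split; apply (closure_bounded_of_bound A _ c Hc); [exact Hb |].
    apply mulr_bound_star; assumption.
Qed.
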